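(* For positive integers $a<b\le c$, the words in $\mathbb{P}^*$ that are Wilf equivalent to $bac$ are exactly $bac$ and $cab$.
   Context: $\mathbb{P}^*$ is the set of finite words over the positive integers (usual order). For $w=w_1\ldots w_n$, $\mathrm{wt}(w)=t^nx^{\sum_i w_i}$. For words $u,w$, $u\le w$ (generalized factor order) if there are $|u|$ consecutive letters of $w$ whose $i$-th letter is $\ge$ the $i$-th letter of $u$ for each $i$. $F(u;t,x)=\sum_{w\in\mathbb{P}^*,\,u\le w}\mathrm{wt}(w)$, and $u\backsim v$ (Wilf equivalence) iff $F(u;t,x)=F(v;t,x)$. *)

From mathcomp Require Import all_boot.
Set Implicit Arguments. Unset Strict Implicit. Unset Printing Implicit Defensive.

Definition pword (w : seq nat) : bool := all (fun i => 0 < i) w.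

Definition gfo (u w : seq nat) : bool :=
  [exists i : 'I_(size w).+1, (i + size u <= size w) &&
    [forall j : 'I_(size u), nth 0 u j <= nth 0 w (i + j)]].

(* Coefficient of t^n x^s in F(u;t,x): number of words w in P^* with
   |w| = n, sum of letters = s, and u <= w.  (Any such word has all letters
   <= s, so it is represented by an n-tuple over 'I_s.+1.) *)
Definition Fcoef (u : seq nat) (n s : nat) : nat :=
  #|[set w : n.-tuple 'I_s.+1 |
      [&& pword (map val w), sumn (map val w) == s &
          gfo u (map val w) ]]|.

Definition wilf_equiv (u v : seq nat) : Prop :=
  forall n s, Fcoef u n s = Fcoef v n s.

(** A word [w] of length [n] contains the positive word [u] as a generalized
   factor iff [w] dominates letterwise one of the profiles "[u] at position
   [i], [1] elsewhere".  The number of words of length [n] and sum [s]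
   dominating a profile [f] depends only on the weight [f 0 + ... + f (n-1)]
   (shifting by [g - f] is a bijection); it is zero for [s] below the weight
   and positive at it.  By inclusion-exclusion the coefficients of [F(u)] in
   lengths [|u|], [|u|+1], [|u|+2] are sums and differences of such counts,
   and comparing the least sums at which they are nonzero shows that a word
   [xyz] Wilf equivalent to [bac] has the same letter sum, the same weight
   [x + max(x,y) + max(y,z) + z] of two overlapping occurrences, and a
   related constraint on two occurrences at distance two; for [a < b <= c]
   these leave only [bac] and [cab].  Conversely, reversal preserves [F]. *)

From mathcomp Require Import all_boot zify.
Set Implicit Arguments. Unset Strict Implicit. Unset Printing Implicit Defensive.

Definition weight (n : nat) (f : nat -> nat) : nat := \sum_(m < n) f m.

Definition maxp (f g : nat -> nat) (m : nat) : nat := maxn (f m) (g m).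

Section Profiles.
Variables n s : nat.
Local Notation word := (n.-tuple 'I_s.+1).

Definition above (f : nat -> nat) : {set word} :=
  [set w : word | (\sum_(m < n) (tnth w m : nat) == s) &&
                  [forall m : 'I_n, f m <= tnth w m]].

Lemma above_weight_le f (w : word) : w \in above f -> weight n f <= s.
Proof.
rewrite inE => /andP[/eqP sum_w /forallP dom_w]; rewrite -sum_w; exact: leq_sum.
Qed.

Lemma card_above_eq0 f : s < weight n f -> #|above f| = 0.
Proof.
move=> lt_s_f; apply: eq_card0 => w.
by apply/negP => /above_weight_le; rewrite leqNgt lt_s_f.
Qed.

Lemma aboveI f g : above f :&: above g = above (maxp f g).
Proof.
apply/setP => w; rewrite !inE andbACA andbb; congr (_ && _).
apply/andP/forallP => [[/forallP dom_f /forallP dom_g] m | dom_fg].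
  by rewrite geq_max dom_f dom_g.
by split; apply/forallP => m; have := dom_fg m; rewrite geq_max => /andP[].
Qed.

Definition word_of (h : 'I_n -> nat) : word := [tuple inord (h m) | m < n].

Lemma word_ofE h m : h m <= s -> tnth (word_of h) m = h m :> nat.
Proof. by move=> le_hs; rewrite tnth_mktuple inordK. Qed.

Lemma word_of_above (f : nat -> nat) (h : 'I_n -> nat) :
  \sum_(m < n) h m = s -> (forall m : 'I_n, f m <= h m) -> word_of h \in above f.
Proof.
move=> sum_h le_fh.
have le_hs m : h m <= s by rewrite -sum_h (bigD1 m) //= leq_addr.
rewrite inE; apply/andP; split.
  by apply/eqP; rewrite -[RHS]sum_h; apply: eq_bigr => m _; rewrite word_ofE.
by apply/forallP => m; rewrite word_ofE.
Qed.

Lemma card_above_gt0 f : weight n f = s -> 0 < #|above f|.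
Proof. by move=> wf; apply/card_gt0P; exists (word_of f); exact: word_of_above. Qed.

(* [w |-> w - f + g] maps [above f] injectively into [above g]. *)
Lemma card_above_le f g : weight n f = weight n g -> #|above f| <= #|above g|.
Proof.
move=> wfg.
pose shift (w : word) m := tnth w m - f m + g m.
have shift_sum w : w \in above f -> \sum_(m < n) shift w m = s.
  move=> Aw; have le_fs := above_weight_le Aw.
  move: Aw; rewrite inE => /andP[/eqP sum_w /forallP dom_w].
  rewrite big_split sumnB //= -/(weight n g) -wfg sum_w.
  by rewrite subnK // -sum_w; exact: leq_sum.
rewrite -(card_in_imset (f := fun w => word_of (shift w))).
  apply/subset_leq_card/subsetP => _ /imsetP[w Aw ->].
  by apply: word_of_above (shift_sum w Aw) _ => m; rewrite leq_addl.
move=> w1 w2 Aw1 Aw2 eq12.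
have le_shift w m : w \in above f -> shift w m <= s.
  by move=> Aw; rewrite -(shift_sum w Aw) (bigD1 m) //= leq_addr.
apply: eq_from_tnth => m; apply: val_inj; have := congr1 (fun w => val (tnth w m)) eq12.
rewrite /= !word_ofE ?le_shift // /shift.
move: Aw1 Aw2; rewrite !inE => /andP[_ /forallP/(_ m)] + /andP[_ /forallP/(_ m)].
lia.
Qed.

Lemma card_above_weight f g : weight n f = weight n g -> #|above f| = #|above g|.
Proof. by move=> wfg; apply/eqP; rewrite eqn_leq !card_above_le. Qed.

End Profiles.

Lemma weight_eq_of_card n f g :
  (forall s, #|above n s f| = #|above n s g|) -> weight n f = weight n g.
Proof.
move=> eq_fg; wlog lt_fg : f g eq_fg / weight n f < weight n g => [hwlog|].
  case: (ltngtP (weight n f) (weight n g)) => // [lt|lt]; first exact: hwlog.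
  by apply/esym/hwlog.
have := card_above_gt0 (erefl (weight n f)).
by rewrite eq_fg card_above_eq0.
Qed.

(* Compare both sides at the least sum [s] where one of them is nonzero. *)
Lemma weight_cases_of_card n f f' g g' :
  (forall m, f m <= f' m) -> (forall m, g m <= g' m) -> weight n g < weight n g' ->
  (forall s, #|above n s f| + #|above n s g'| = #|above n s g| + #|above n s f'|) ->
  weight n f = weight n g \/ weight n f < weight n g /\ weight n f' = weight n f.
Proof.
move=> le_ff' le_gg' lt_gg' balance.
have le_wff' : weight n f <= weight n f' by exact: leq_sum.
case: (ltngtP (weight n f) (weight n g)) => [lt_fg|lt_gf|]; [right|exfalso|by left].
- split=> //; apply/eqP; rewrite eqn_leq le_wff' andbT leqNgt; apply/negP => lt_ff'.
  have := balance (weight n f).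
  rewrite (card_above_eq0 lt_fg) (card_above_eq0 lt_ff').
  rewrite (card_above_eq0 (f := g') (ltn_trans lt_fg lt_gg')) !addn0 => card_f0.
  by have := card_above_gt0 (erefl (weight n f)); rewrite card_f0.
- have := balance (weight n g).
  rewrite (card_above_eq0 lt_gf) (card_above_eq0 lt_gg').
  rewrite (card_above_eq0 (f := f') (leq_trans lt_gf le_wff')) !addn0 => card_g0.
  by have := card_above_gt0 (erefl (weight n g)); rewrite -card_g0.
Qed.

Definition placed (u : seq nat) (i m : nat) : nat :=
  if i <= m < i + size u then nth 0 u (m - i) else 1.

Lemma placed_gt0 u i m : pword u -> 0 < placed u i m.
Proof.
rewrite /placed; case: ifP => // /andP[le_im lt_m] /(all_nthP 0); apply; lia.
Qed.

Lemma gfoP u x : reflect (exists2 i, i + size u <= size x &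
    forall j, j < size u -> nth 0 u j <= nth 0 x (i + j)) (gfo u x).
Proof.
apply: (iffP existsP) => [[i /andP[fits /forallP dom_x]] | [i fits dom_x]].
  by exists i => // j lt_j; exact: (dom_x (Ordinal lt_j)).
have lt_i : i < (size x).+1 by rewrite ltnS (leq_trans _ fits) ?leq_addr.
by exists (Ordinal lt_i); rewrite /= fits; apply/forallP => j; exact: dom_x.
Qed.

Lemma nth_val_tuple n s (w : n.-tuple 'I_s.+1) (m : 'I_n) :
  nth 0 (map val w) m = tnth w m.
Proof. by rewrite (nth_map ord0) ?size_tuple // -tnth_nth. Qed.

Lemma occursP n s u (w : n.-tuple 'I_s.+1) : pword u -> size u <= n ->
  reflect (exists i : 'I_(n - size u).+1, forall m : 'I_n, placed u i m <= tnth w m)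
          (pword (map val w) && gfo u (map val w)).
Proof.
move=> pos_u le_un; have size_w : size (map val w) = n by rewrite size_map size_tuple.
apply: (iffP andP) => [[/all_tnthP pos_w /gfoP[i]] | [i dom_w]].
  rewrite size_w => fits dom_w.
  have lt_i : i < (n - size u).+1 by lia.
  exists (Ordinal lt_i) => m; rewrite /placed /=; case: ifP => [/andP[le_im lt_m]|_].
    by have := dom_w (m - i); rewrite subnKC // nth_val_tuple; apply; lia.
  by have := pos_w m; rewrite tnth_map.
split.
  apply/all_tnthP => m; rewrite tnth_map.
  exact: leq_trans (placed_gt0 i m pos_u) (dom_w m).
apply/gfoP; exists i; first by rewrite size_w; have := ltn_ord i; lia.
move=> j lt_j; have lt_ij : i + j < n by have := ltn_ord i; lia.
rewrite (nth_val_tuple w (Ordinal lt_ij)); have := dom_w (Ordinal lt_ij).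
by rewrite /placed /= addKn leq_addr ltn_add2l lt_j.
Qed.

Lemma Fcoef_cover u n d s : pword u -> size u + d = n ->
  Fcoef u n s = #|\bigcup_(i < d.+1) above n s (placed u i)|.
Proof.
move=> pos_u def_n; have le_un : size u <= n by rewrite -def_n leq_addr.
have -> : d = n - size u by rewrite -def_n addKn.
apply: eq_card => w; rewrite !inE andbCA sumnE big_map big_tuple.
apply/andP/bigcupP => [[sum_w /(occursP _ pos_u le_un)[i dom_w]] | [i _]].
  by exists i => //; rewrite inE sum_w; apply/forallP.
rewrite inE => /andP[sum_w /forallP dom_w]; split=> //.
by apply/(occursP _ pos_u le_un); exists i.
Qed.

Lemma gfo_rev u x : gfo u x -> gfo (rev u) (rev x).
Proof.
move/gfoP => [i fits dom_x]; apply/gfoP; rewrite !size_rev.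
exists (size x - size u - i) => [|j lt_j]; first lia.
rewrite !nth_rev ?size_rev; try lia.
have -> : size x - (size x - size u - i + j).+1 = i + (size u - j.+1) by lia.
by apply: dom_x; lia.
Qed.

Lemma Fcoef_rev_le u n s : Fcoef u n s <= Fcoef (rev u) n s.
Proof.
pose rev_word (w : n.-tuple 'I_s.+1) := [tuple of rev w].
have rev_word_inj : injective rev_word.
  by move=> w1 w2 /(congr1 val)/(can_inj revK)/val_inj.
rewrite /Fcoef -(card_imset _ rev_word_inj); apply/subset_leq_card/subsetP.
move=> _ /imsetP[w + ->]; rewrite !inE /= !map_rev /pword all_rev sumn_rev.
by case/and3P=> -> -> /gfo_rev.
Qed.

Lemma Fcoef_rev u n s : Fcoef (rev u) n s = Fcoef u n s.
Proof. by apply/eqP; rewrite eqn_leq -{2}(revK u) !Fcoef_rev_le. Qed.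

Lemma Fcoef_short u n s : n < size u -> Fcoef u n s = 0.
Proof.
move=> lt_nu; apply: eq_card0 => w; rewrite inE.
by apply/negP => /and3P[_ _ /gfoP[i]]; rewrite size_map size_tuple; lia.
Qed.

Lemma weightS n f : weight n.+1 f = weight n f + f n.
Proof. exact: big_ord_recr. Qed.

Lemma weight0 f : weight 0 f = 0.
Proof. exact: big_ord0. Qed.

Lemma weight_placed0 u : weight (size u) (placed u 0) = sumn u.
Proof.
rewrite sumnE (big_nth 0) big_mkord; apply: eq_bigr => m _.
by rewrite /placed /= ltn_ord subn0.
Qed.

Lemma Fcoef_sumn_gt0 u : pword u -> 0 < Fcoef u (size u) (sumn u).
Proof.
move=> pos_u; rewrite (Fcoef_cover (d := 0)) ?addn0 // big_ord1.
exact/card_above_gt0/weight_placed0.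
Qed.

Lemma wilf_equiv_size u v : pword u -> pword v -> wilf_equiv u v -> size u = size v.
Proof.
move=> pos_u pos_v wilf_uv; case: (ltngtP (size u) (size v)) => // lt_size.
  by have := Fcoef_sumn_gt0 pos_u; rewrite wilf_uv Fcoef_short.
by have := Fcoef_sumn_gt0 pos_v; rewrite -wilf_uv Fcoef_short.
Qed.

Lemma cardsI_eq (T : finType) (A B A' B' : {set T}) :
  #|A :|: B| = #|A' :|: B'| -> #|A| = #|A'| -> #|B| = #|B'| ->
  #|A :&: B| = #|A' :&: B'|.
Proof.
by move=> eqU eqA eqB; apply/(@addnI #|A :|: B|); rewrite cardsUI eqU cardsUI eqA eqB.
Qed.

Lemma cardsU3 (T : finType) (A B C : {set T}) :
  #|A :|: B :|: C| + #|A :&: B| + #|B :&: C| + #|A :&: C| =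
  #|A| + #|B| + #|C| + #|A :&: B :&: C|.
Proof.
have := cardsUI A B; have := cardsUI (A :|: B) C; rewrite setIUl.
have := cardsUI (A :&: C) (B :&: C); rewrite setIACA setIid; lia.
Qed.

Lemma cardsU3_balance (T : finType) (A B C A' B' C' : {set T}) :
  #|A :|: B :|: C| = #|A' :|: B' :|: C'| ->
  #|A| = #|A'| -> #|B| = #|B'| -> #|C| = #|C'| ->
  #|A :&: B| = #|A' :&: B'| -> #|B :&: C| = #|B' :&: C'| ->
  #|A :&: C| + #|A' :&: B' :&: C'| = #|A' :&: C'| + #|A :&: B :&: C|.
Proof.
by move=> eqU eqA eqB eqC eqAB eqBC; have := cardsU3 A B C; have := cardsU3 A' B' C'; lia.
Qed.

Lemma maxn1 n : 0 < n -> maxn n 1 = n.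
Proof. exact/maxn_idPl. Qed.

Lemma max1n n : 0 < n -> maxn 1 n = n.
Proof. exact/maxn_idPr. Qed.

Section ThreeLetterWords.
Variables (x y z x' y' z' : nat).
Hypotheses (x_gt0 : 0 < x) (y_gt0 : 0 < y) (z_gt0 : 0 < z).
Hypotheses (x'_gt0 : 0 < x') (y'_gt0 : 0 < y') (z'_gt0 : 0 < z').
Hypothesis wilf : wilf_equiv [:: x; y; z] [:: x'; y'; z'].
Local Notation p := (placed [:: x; y; z]).
Local Notation p' := (placed [:: x'; y'; z']).

Let pos : pword [:: x; y; z].
Proof. by rewrite /pword /= x_gt0 y_gt0 z_gt0. Qed.

Let pos' : pword [:: x'; y'; z'].
Proof. by rewrite /pword /= x'_gt0 y'_gt0 z'_gt0. Qed.

Local Ltac expand_weights :=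
  rewrite !weightS !weight0 /maxp /placed /= ?(maxnn, maxn1 x_gt0, maxn1 y_gt0,
    maxn1 z_gt0, max1n x_gt0, max1n y_gt0, max1n z_gt0, maxn1 x'_gt0, maxn1 y'_gt0,
    maxn1 z'_gt0, max1n x'_gt0, max1n y'_gt0, max1n z'_gt0).

Lemma wilf3_sum : x + y + z = x' + y' + z'.
Proof.
have : weight 3 (p 0) = weight 3 (p' 0).
  apply: weight_eq_of_card => s.
  by have := wilf 3 s; rewrite !(Fcoef_cover (d := 0)) // !big_ord1.
by expand_weights; lia.
Qed.

Lemma wilf3_overlap1 : x + maxn x y + maxn y z + z = x' + maxn x' y' + maxn y' z' + z'.
Proof.
have sum_eq := wilf3_sum.
have : weight 4 (maxp (p 0) (p 1)) = weight 4 (maxp (p' 0) (p' 1)).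
  apply: weight_eq_of_card => s; rewrite -!aboveI; apply: cardsI_eq.
  - by have := wilf 4 s; rewrite !(Fcoef_cover (d := 1)) // !big_ord_recr !big_ord0 /= !set0U.
  - by apply: card_above_weight; expand_weights; lia.
  - by apply: card_above_weight; expand_weights; lia.
by expand_weights; lia.
Qed.

Lemma wilf3_overlap2 :
  x' + 2 * y' + maxn x' z' + z' < x' + maxn x' y' + maxn (maxn x' y') z' + maxn y' z' + z' ->
  x + 2 * y + maxn x z + z = x' + 2 * y' + maxn x' z' + z' \/
  x + 2 * y + maxn x z + z < x' + 2 * y' + maxn x' z' + z' /\
  x + maxn x y + maxn (maxn x y) z + maxn y z + z = x + 2 * y + maxn x z + z.
Proof.
have sum_eq := wilf3_sum.
have le_02_012 w i : maxp (placed w 0) (placed w 2) i <=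
                     maxp (maxp (placed w 0) (placed w 1)) (placed w 2) i.
  by rewrite /maxp; lia.
have balance s : #|above 5 s (maxp (p 0) (p 2))| +
                 #|above 5 s (maxp (maxp (p' 0) (p' 1)) (p' 2))| =
                 #|above 5 s (maxp (p' 0) (p' 2))| +
                 #|above 5 s (maxp (maxp (p 0) (p 1)) (p 2))|.
  rewrite -!aboveI; apply: cardsU3_balance.
  - by have := wilf 5 s; rewrite !(Fcoef_cover (d := 2)) // !big_ord_recr !big_ord0 /= !set0U.
  - by apply: card_above_weight; expand_weights; lia.
  - by apply: card_above_weight; expand_weights; lia.
  - by apply: card_above_weight; expand_weights; lia.
  - have overlap1 := wilf3_overlap1.
    by rewrite !aboveI; apply: card_above_weight; expand_weights; lia.
  - have overlap1 := wilf3_overlap1.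
    by rewrite !aboveI; apply: card_above_weight; expand_weights; lia.
have weight02 : weight 5 (maxp (p 0) (p 2)) = x + 2 * y + maxn x z + z.
  by expand_weights; lia.
have weight02' : weight 5 (maxp (p' 0) (p' 2)) = x' + 2 * y' + maxn x' z' + z'.
  by expand_weights; lia.
have weight012 : weight 5 (maxp (maxp (p 0) (p 1)) (p 2)) =
                 x + maxn x y + maxn (maxn x y) z + maxn y z + z.
  by expand_weights; lia.
have weight012' : weight 5 (maxp (maxp (p' 0) (p' 1)) (p' 2)) =
                  x' + maxn x' y' + maxn (maxn x' y') z' + maxn y' z' + z'.
  by expand_weights; lia.
rewrite -weight02 -weight02' -weight012 -weight012' => lt_weight'.
exact: weight_cases_of_card (le_02_012 _) (le_02_012 _) lt_weight' balance.
Qed.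

End ThreeLetterWords.

Theorem corollary6 (a b c : nat) :
  0 < a -> a < b -> b <= c ->
  forall v : seq nat, pword v ->
    (wilf_equiv v [:: b; a; c] <-> (v = [:: b; a; c] \/ v = [:: c; a; b])).
Proof.
move=> a_gt0 lt_ab le_bc v pos_v; split=> [wilf_v|]; last first.
  by case=> -> n s //; exact: (Fcoef_rev [:: b; a; c]).
have b_gt0 : 0 < b by lia.
have c_gt0 : 0 < c by lia.
have pos_u : pword [:: b; a; c] by rewrite /pword /= a_gt0 b_gt0 c_gt0.
case: v pos_v wilf_v (wilf_equiv_size pos_v pos_u wilf_v) => [|x [|y [|z [|]]]] //.
move=> /and4P[x_gt0 y_gt0 z_gt0 _] wilf_v _.
have := wilf3_sum x_gt0 y_gt0 z_gt0 b_gt0 a_gt0 c_gt0 wilf_v.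
have := wilf3_overlap1 x_gt0 y_gt0 z_gt0 b_gt0 a_gt0 c_gt0 wilf_v.
have := wilf3_overlap2 x_gt0 y_gt0 z_gt0 b_gt0 a_gt0 c_gt0 wilf_v.
have -> : maxn b a = b by lia.
have -> : maxn b c = c by lia.
have -> : maxn a c = c by lia.
move=> overlap2 overlap1 sum_eq.
suff : x = b /\ y = a /\ z = c \/ x = c /\ y = a /\ z = b.
  by case=> [[-> [-> ->]] | [-> [-> ->]]]; [left | right].
lia.
Qed.
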